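(* Let $X$ be a compact metric space and let $f:X\to X$ be a continuous function such that every accumulation point of $X$ is a fixed point of $f$. If $V,W\subseteq X$ are nonempty open sets such that $\overline V\cap\overline W=\emptyset$, then the set $\{x\in X: x\in V \text{ and } f(x)\in W\}$ is finite.
   Context: An accumulation point of $X$ is a non-isolated point of $X$; a point $x$ is fixed if $f(x)=x$. *)

From HB Require Import structures.
From mathcomp Require Import all_boot all_order all_algebra.
From mathcomp Require Import all_classical all_reals all_analysis.

From HB Require Import structures.
From mathcomp Require Import all_boot all_order all_algebra.
From mathcomp Require Import all_classical all_reals all_analysis.
Import numFieldNormedType.Exports.
Local Open Scope classical_set_scope.

(* If the set S of points of V mapped into W were infinite, compactness would
   give an accumulation point p of S. Then p is an accumulation point of X,
   hence fixed by f; p lies in the closure of V since S is contained in V, and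
   f p lies in the closure of W since f maps S into W and f is continuous. So
   p = f p is in both closures, a contradiction. *)

Section cofinite_in.
Context {T : Type} (S : set T).

Definition cofinite_in : set_system T := fun A => finite_set (S `\` A).

Lemma cofinite_in_filter : Filter cofinite_in.
Proof.
constructor; rewrite /cofinite_in.
- by rewrite setDT; exact: finite_set0.
- by move=> A B FA FB; rewrite setDIr finite_setU.
- by move=> A B AB; apply: sub_finite_set => x [Sx nBx]; split=> // /AB.
Qed.

Lemma cofinite_in_proper : infinite_set S -> ProperFilter cofinite_in.
Proof.
by move=> infS; split; [rewrite /cofinite_in setD0 | exact: cofinite_in_filter].
Qed.

Lemma cofinite_in_setD1 (p : T) : cofinite_in (S `\ p).
Proof.
apply: sub_finite_set (finite_set1 p) => x [Sx nSpx].
by apply: contrapT => xp; apply: nSpx.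
Qed.

End cofinite_in.

Section topology.
Context {T : topologicalType}.

Lemma limit_pointS (A B : set T) : A `<=` B -> limit_point A `<=` limit_point B.
Proof. by move=> AB p Ap U /Ap [y [yp /AB By Uy]]; exists y. Qed.

Lemma compact_infinite_limit_point {K S : set T} :
  compact K -> S `<=` K -> infinite_set S -> exists2 p, K p & limit_point S p.
Proof.
move=> cK SK infS.
have Fproper := cofinite_in_proper S infS.
have FK : cofinite_in S K.
  by rewrite /cofinite_in (_ : S `\` K = set0) ?setD_eq0 //; exact: finite_set0.
have [p [Kp clp]] := cK _ Fproper FK.
exists p => // U pU.
have [y [[Sy /eqP yp] Uy]] := clp _ _ (cofinite_in_setD1 S p) pU.
by exists y.
Qed.

Lemma continuous_image_closure {U : topologicalType} (f : T -> U) (A : set T) :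
  continuous f -> f @` closure A `<=` closure (f @` A).
Proof.
move=> cf _ [x clAx <-] B /cf /clAx [y [Ay Bfy]].
by exists (f y); split; [exists y|].
Qed.

End topology.

Theorem lemma3p3 (R : realType) (X : pseudoMetricType R)
  (hX : hausdorff_space X) (cX : compact [set: X])
  (f : X -> X) (cf : continuous f)
  (hfix : forall x : X, limit_point [set: X] x -> f x = x)
  (V W : set X) (oV : open V) (oW : open W) (nV : V !=set0) (nW : W !=set0)
  (dVW : closure V `&` closure W = set0) :
  finite_set [set x : X | V x /\ W (f x)].
Proof.
set S := [set x : X | V x /\ W (f x)].
apply: contrapT => infS.
have [p _ Sp] := compact_infinite_limit_point cX (subsetT S) infS.
have fp : f p = p by apply: hfix; exact: limit_pointS Sp.
have clSp : closure S p by exact: subset_limit_point.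
have SV : S `<=` V by move=> x [].
have fSW : f @` S `<=` W by move=> _ [x [_ Wfx] <-].
have clVp : closure V p := closureS SV clSp.
have clWp : closure W (f p).
  by apply: (closureS fSW); exact: continuous_image_closure (imageP f clSp).
have : (closure V `&` closure W) p by split; rewrite // -fp.
by rewrite dVW.
Qed.
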